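(* Let $p$ be an odd prime, $G$ a finite group with a Sylow $p$-subgroup $P$, and $H$ a normal subgroup of $G$ such that $G = PH$. Set $Q = P \cap H$. Let $P$ act by conjugation on $N_H(Q)/QC_H(Q)$. Then $C_{N_H(Q)/QC_H(Q)}(P) = N_H(P)C_H(Q)/QC_H(Q)$, and the inclusion $N_H(P) \subseteq N_G(P)$ induces a well-defined surjective group homomorphism $$C_{N_H(Q)/QC_H(Q)}(P) \to N_G(P)/PC_G(P)$$ (sending the coset of $n \in N_H(P)$ to $nPC_G(P)$) whose kernel is a $p$-group.
   Context: $C_X(P)$ for a group $X$ on which $P$ acts denotes the subgroup of $P$-fixed elements. *)

From mathcomp Require Import all_boot all_fingroup all_solvable.
Set Implicit Arguments. Unset Strict Implicit. Unset Printing Implicit Defensive.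

From mathcomp Require Import all_boot all_fingroup all_solvable.

(* Let Q = P :&: H, K = Q C_H(Q) and L = P C_G(P).  A coset nK of N_H(Q)/K is
   fixed by P iff [n, P] \subset K, i.e. P^n \subset PK; since P is Sylow in
   PK, Sylow conjugacy gives n \in N_H(P) K, while conversely
   [N_H(P), P] \subset Q.  The map nK |-> nL on N_H(P)/K is well defined
   because N_H(P) :&: K \subset L: for c in N_H(P) :&: C_H(Q), the p-part of
   c lies in the normal Sylow subgroup P of N_G(P), and its p'-part
   centralises Q and P/Q, hence P by coprime action.  It is onto because
   N_G(P) = P N_H(P) by the Dedekind law, and its kernel is a p-group because
   N_H(P) :&: C_G(P) \subset K and L/C_G(P) is a p-group. *)

Set Implicit Arguments.
Unset Strict Implicit.
Unset Printing Implicit Defensive.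

Local Open Scope group_scope.

Section General.
Variable gT : finGroupType.
Implicit Types (A : {set gT}) (C G H K L M N P R X : {group gT}).

Lemma afix_qactJ K A : A \subset 'N(K) -> 'Fix_('J / K)(A) = 'C(A / K).
Proof.
move=> nKA; apply/setP=> X; apply/afixP/centP=> [fixX y | cAX a Aa].
  case/morphimP=> a Na Aa ->; have := fixX a Aa.
  by rewrite qactJ Na /commute conjgC => ->.
have nKa := subsetP nKA a Aa.
by rewrite qactJ nKa /conjg cAX ?mulKg ?mem_morphim.
Qed.

Lemma coprime_stable_factor_cent (A P Q : {group gT}) :
    A \subset 'N(P) -> A \subset 'C(Q) -> stable_factor A Q P ->
    coprime #|Q| #|A| -> solvable Q ->
  A \subset 'C(P).
Proof.
move=> nPA cQA /andP[sPAQ /andP[sQP nQP]] coQA solQ.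
have nQA := cents_norm cQA.
have cPAq : 'C_(P / Q)(A / Q) = P / Q.
  by apply/setIidPl; rewrite quotient_cents2 ?sPAQ.
have sPQC : P \subset Q * 'C_P(A).
  by rewrite -quotientSK // coprime_norm_quotient_cent // cPAq.
by rewrite centsC (subset_trans sPQC) // mul_subG ?subsetIr // centsC.
Qed.

Lemma group_constt pi G x : x \in G -> x.`_pi \in G.
Proof.
by move=> Gx; apply: subsetP (cycle_constt pi x); rewrite cycle_subG.
Qed.

Lemma mulg_subnorm P H : 'N_(P * H)(P) = P * 'N_H(P).
Proof. by rewrite group_modl ?normG. Qed.

Lemma mem_norm_mulg_Sylow_conj p X P n :
  p.-Sylow(X) P -> P :^ n \subset X -> n \in 'N(P) * X.
Proof.
move=> sylP sPnX.
have sylPn : p.-Sylow(X) (P :^ n).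
  by move: sylP; rewrite !pHallE cardJg sPnX => /andP[].
have [x Xx defPn] := Sylow_trans sylP sylPn.
rewrite -(mulgKV x n) mem_mulg //; apply/normP.
by rewrite conjsgM defPn conjsgK.
Qed.

Lemma quotient_cent_Sylow_sub_norm p K N P :
    p.-Sylow(P <*> K) P -> P \subset 'N(K) -> K \subset N ->
  'C_(N / K)(P / K) \subset 'N_N(P) / K.
Proof.
move=> sylP nKP sKN; apply/subsetP=> _ /setIP[/morphimP[n Kn Nn ->] cPn].
have cnK a : a \in P -> [~ n, a] \in K.
  move=> Pa; move: cPn; rewrite -cycle_subG -quotient_cycle //.
  rewrite quotient_cents2 ?cycle_subG // => /subsetP; apply.
  by rewrite mem_commg ?cycle_id.
have sPnPK : P :^ n \subset P <*> K.
  apply/subsetP=> _ /imsetP[a Pa ->].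
  rewrite conjg_mulR -invg_comm groupM ?groupV ?cnK //.
    exact: (subsetP (joing_subl P K)).
  by rewrite (subsetP (joing_subr P K)) ?cnK.
have := mem_norm_mulg_Sylow_conj sylP sPnPK.
rewrite /= norm_joinEl // mulgA mulGSid ?normG //.
case/mulsgP=> m k Nm Kk defn.
rewrite defn coset_kerr // mem_quotient // inE Nm andbT.
by rewrite -(mulgK k m) -defn groupM ?groupV // (subsetP sKN).
Qed.

Lemma quotient_factor_morphism K L M :
    M \subset 'N(K) -> M \subset 'N(L) -> M :&: K \subset L ->
  exists f : {morphism M / K >-> coset_of L},
    [/\ {in M, forall n, f (coset K n) = coset L n},
        f @* (M / K) = M / L
      & 'ker f = (M :&: L) / K].
Proof.
move=> nKM nLM sMKL.
have sker : 'ker (restrm nKM (coset K)) \subset 'ker (restrm nLM (coset L)).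
  by rewrite !ker_restrm !ker_coset subsetI subsetIl.
have imK : restrm nKM (coset K) @* M = M / K by rewrite morphim_restrm setIid.
rewrite -imK; exists (factm sker (subxx M)); split.
- exact: factmE.
- by rewrite morphim_factm morphim_restrm setIid.
by rewrite ker_factm ker_restrm ker_coset morphim_restrm setIA setIid.
Qed.

Lemma quotient_pgroup_subjoin p P C R K :
    p.-group P -> P \subset 'N(C) -> R \subset P <*> C ->
    R \subset 'N(K) -> R :&: C \subset K ->
  p.-group (R / K).
Proof.
move=> pP nCP sRPC nKR sRCK.
have nCR : R \subset 'N(C).
  by rewrite (subset_trans sRPC) // join_subG nCP normG.
rewrite /pgroup card_quotient // -indexgI.
have sRC_RK : R :&: C \subset R :&: K by rewrite subsetI subsetIl.
apply: pnat_dvd (indexgS R sRC_RK) _; rewrite indexgI -card_quotient //.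
apply: pgroupS (quotientS C sRPC) _.
by rewrite /= norm_joinEl // quotientMidr quotient_pgroup.
Qed.

End General.

Section NormalizerQuotients.
Variables (gT : finGroupType) (p : nat) (G P H : {group gT}).
Hypotheses (sylP : p.-Sylow(G) P) (nsHG : H <| G) (defG : P * H = G).

Local Notation Q := (P :&: H).
Local Notation C := 'C_H(P :&: H).
Local Notation K := ((P :&: H) <*> 'C_H(P :&: H)).
Local Notation L := (P <*> 'C_G(P)).
Local Notation M := 'N_H(P).

Let sPG : P \subset G := pHall_sub sylP.
Let pP : p.-group P := pHall_pgroup sylP.
Let sHG : H \subset G := normal_sub nsHG.
Let nHP : P \subset 'N(H) := subset_trans sPG (normal_norm nsHG).

Let nsQP : Q <| P.
Proof. by rewrite /normal subsetIl normsI ?normG. Qed.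

Let sKH : K \subset H.
Proof. by rewrite join_subG subsetIr subsetIl. Qed.

Let normsK (A : {set gT}) :
  A \subset 'N(Q) -> A \subset 'N(H) -> A \subset 'N(K).
Proof. by move=> nQA nHA; rewrite normsY // normsI // norms_cent. Qed.

Let nKP : P \subset 'N(K).
Proof. exact: normsK (normal_norm nsQP) nHP. Qed.

Let nQM : M \subset 'N(Q).
Proof. by rewrite normsI ?subsetIr // subIset ?normG. Qed.

Let nKM : M \subset 'N(K).
Proof. by rewrite normsK ?nQM // subIset ?normG. Qed.

Let nLM : M \subset 'N(L).
Proof.
rewrite normsY ?subsetIr // normsI ?norms_cent ?subsetIr //.
by rewrite (subset_trans (subsetIl H _)) ?(subset_trans sHG) ?normG.
Qed.

Lemma commg_subnorm_sub : [~: M, P] \subset Q.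
Proof. by rewrite [P :&: H]setIC commg_subI // subsetI subxx nHP. Qed.

Lemma Fix_quotient_subnorm : 'Fix_('N_H(Q) / K | 'J / K)(P) = M / K.
Proof.
have sylPK : p.-Sylow(P <*> K) P.
  apply: pHall_subl (joing_subl _ _) _ sylP.
  by rewrite join_subG sPG (subset_trans sKH).
have sKNQ : K \subset 'N_H(Q).
  rewrite join_subG !subsetI subsetIr subsetIl normG /=.
  by rewrite (subset_trans (subsetIr _ _) (cent_sub _)).
rewrite afix_qactJ //; apply/eqP; rewrite eqEsubset; apply/andP; split.
  apply: subset_trans (quotient_cent_Sylow_sub_norm sylPK nKP sKNQ) _.
  by rewrite quotientS // setSI // subsetIl.
rewrite subsetI quotientS ?subsetI ?subsetIl ?nQM //=.
by rewrite quotient_cents2r // (subset_trans commg_subnorm_sub) ?joing_subl.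
Qed.

Lemma quotient_subnorm_mul_subcent : (M * C) / K = M / K.
Proof.
rewrite quotientMr ?(quotientS1 (joing_subr _ _)) ?mulg1 //.
exact: subset_trans (joing_subr _ _) (normG _).
Qed.

Lemma p'_elt_subcent_cent y :
  y \in M -> y \in C -> p^'.-elt y -> y \in 'C(P).
Proof.
move=> My /setIP[_ cQy] p'y; rewrite -cycle_subG.
apply: (coprime_stable_factor_cent (Q := Q)); rewrite ?cycle_subG //.
- by case/setIP: My.
- rewrite /stable_factor nsQP andbT commGC.
  by rewrite (subset_trans _ commg_subnorm_sub) // commgSS ?cycle_subG.
- by rewrite (pnat_coprime (pgroupS (subsetIl P H) pP)) -?orderE.
exact: pgroup_sol (pgroupS (subsetIl P H) pP).
Qed.

Lemma subnorm_subcent_sub : M :&: C \subset L.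
Proof.
apply/subsetP=> c /setIP[Mc Cc].
have NGc : c \in 'N_G(P) by rewrite (subsetP (setSI _ sHG)).
rewrite -(consttC p c) groupM //.
  have sylPN : p.-Sylow('N_G(P)) P.
    by rewrite (pHall_subl _ _ sylP) ?subsetIl // subsetI sPG normG.
  apply: (subsetP (joing_subl _ _)).
  rewrite (mem_normal_Hall sylPN) ?normal_subnorm ?group_constt //.
  exact: p_elt_constt.
apply: (subsetP (joing_subr _ _)).
have Gc : c \in G by case/setIP: NGc.
by rewrite inE group_constt //= p'_elt_subcent_cent ?p_elt_constt ?group_constt.
Qed.

Lemma subnorm_ker_sub : M :&: K \subset L.
Proof.
have nQC : C \subset 'N(Q) by rewrite subIset // cent_sub orbT.
have sQM : Q \subset M.
  by rewrite subsetI subsetIr (subset_trans (subsetIl P H)) ?normG.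
rewrite /= (norm_joinEr nQC) setIC -group_modl // mul_subG //.
  exact: subset_trans (subsetIl P H) (joing_subl _ _).
by rewrite setIC subnorm_subcent_sub.
Qed.

Lemma quotient_subnorm_join : M / L = 'N_G(P) / L.
Proof.
have nLP : P \subset 'N(L) := subset_trans (joing_subl _ _) (normG _).
have -> : 'N_G(P) = P * M by rewrite -mulg_subnorm defG.
by rewrite quotientMl // quotientS1 ?joing_subl ?mul1g.
Qed.

Lemma pgroup_quotient_subnorm_join : p.-group ((M :&: L) / K).
Proof.
apply: (quotient_pgroup_subjoin pP _ (subsetIr M L)).
- by rewrite /= normsI ?norms_cent ?normG // (subset_trans sPG) ?normG.
- by rewrite /= subIset ?nKM.
apply/subsetP=> x /setIP[/setIP[/setIP[Hx _] _] /setIP[_ cPx]].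
apply: (subsetP (joing_subr _ _)).
by rewrite inE Hx (subsetP (centS (subsetIl P H))).
Qed.

Lemma subnorm_quotient_morphism :
  exists f : {morphism M / K >-> coset_of L},
    [/\ {in M, forall n, f (coset K n) = coset L n},
        f @* (M / K) = 'N_G(P) / L
      & p.-group ('ker f)].
Proof.
have [f [fE imf kerf]] := quotient_factor_morphism nKM nLM subnorm_ker_sub.
exists f; split=> //; first by rewrite imf quotient_subnorm_join.
by rewrite kerf pgroup_quotient_subnorm_join.
Qed.

End NormalizerQuotients.

Theorem lemma2p1 (gT : finGroupType) (p : nat) (G P H : {group gT}) :
  prime p -> odd p ->
  P \in 'Syl_p(G) -> H <| G -> P * H = G ->
  'Fix_('N_H(P :&: H) / ((P :&: H) <*> 'C_H(P :&: H)) | 'J / ((P :&: H) <*> 'C_H(P :&: H)))(P)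
    = ('N_H(P) * 'C_H(P :&: H)) / ((P :&: H) <*> 'C_H(P :&: H))
  /\
  exists f : {morphism 'Fix_('N_H(P :&: H) / ((P :&: H) <*> 'C_H(P :&: H)) | 'J / ((P :&: H) <*> 'C_H(P :&: H)))(P)
               >-> coset_of (P <*> 'C_G(P))},
    [/\ forall n, n \in 'N_H(P) ->
          f (coset ((P :&: H) <*> 'C_H(P :&: H)) n) = coset (P <*> 'C_G(P)) n,
        f @* 'Fix_('N_H(P :&: H) / ((P :&: H) <*> 'C_H(P :&: H)) | 'J / ((P :&: H) <*> 'C_H(P :&: H)))(P)
          = 'N_G(P) / (P <*> 'C_G(P))
      & p.-group ('ker f)].
Proof.
move=> _ _; rewrite inE => sylP nsHG defG.
rewrite (Fix_quotient_subnorm sylP nsHG) quotient_subnorm_mul_subcent.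
split=> //; exact: subnorm_quotient_morphism.
Qed.
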